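(* Let $S_n$ be the star tree on $n\geq 3$ vertices. Then $$\det(xI-\mathrm{Max4PC}_{S_n})=x^{\binom{n}{2}-2}\left(x^2-2(n-1)^2x-(n-1)\binom{n-1}{2}\right),$$ so the nonzero eigenvalues of $\mathrm{Max4PC}_{S_n}$ are $$(n-1)^2\pm\sqrt{(n-1)^4+(n-1)\binom{n-1}{2}}.$$
   Context: For a tree $T$ with vertex set $V$, $|V|=n$, let $d_{x,y}$ denote the distance between vertices $x,y$ in $T$. $\mathrm{Max4PC}_T$ is the $\binom{n}{2}\times\binom{n}{2}$ matrix with rows and columns indexed by the $2$-element subsets of $V$, whose entry in row $\{w,x\}$ and column $\{y,z\}$ is $\max\{d_{w,x}+d_{y,z},\ d_{w,y}+d_{x,z},\ d_{w,z}+d_{x,y}\}$. The star $S_n$ is the tree with one vertex adjacent to all other $n-1$ vertices. *)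

From HB Require Import structures.
From mathcomp Require Import all_boot all_order all_algebra.
Set Implicit Arguments. Unset Strict Implicit. Unset Printing Implicit Defensive.
Import Order.TTheory GRing.Theory Num.Theory.

(* Vertices of the star S_n are 0, 1, ..., n-1 (as 'I_n); vertex 0 is the
   center, adjacent to all others.  Distance in S_n: *)
Definition star_dist (i j : nat) : nat :=
  if i == j then 0 else if (i == 0) || (j == 0) then 1 else 2.

Definition pairs (n : nat) : {set {set 'I_n}} := [set A : {set 'I_n} | #|A| == 2].

Definition fst_el n (A : {set 'I_n}) : nat := nth 0 (map val (enum A)) 0.
Definition snd_el n (A : {set 'I_n}) : nat := nth 0 (map val (enum A)) 1.

Definition max4pc_entry n (A B : {set 'I_n}) : nat :=
  let w := fst_el A in let x := snd_el A in
  let y := fst_el B in let z := snd_el B in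
  maxn (star_dist w x + star_dist y z)
       (maxn (star_dist w y + star_dist x z) (star_dist w z + star_dist x y)).

Definition Max4PC_star (R : nzRingType) (n : nat) : 'M[R]_#|pairs n| :=
  \matrix_(i, j) ((max4pc_entry (enum_val i) (enum_val j))%:R)%R.

From HB Require Import structures.
From mathcomp Require Import all_boot all_order all_algebra ring zify.
Import Order.TTheory GRing.Theory Num.Theory.
Local Open Scope ring_scope.

(* In the star, the Max4PC entry of two pairs is 2 plus one for each pair
   avoiding the center, so Max4PC = P *m Q with P : N x 2 and Q : 2 x N.
   By the Sylvester identity X^2 chi(P Q) = X^N chi(Q P), the characteristic
   polynomial is X^(N-2) times that of the 2 x 2 matrix Q P, whose entries
   are sums over pairs computed by counting the C(n-1, 2) leaf pairs. *)

Lemma enum_card2 n (A : {set 'I_n}) : #|A| = 2%N ->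
  map val (enum A) = [:: fst_el A; snd_el A] /\ fst_el A != snd_el A.
Proof.
move=> A2.
have uA : uniq (map val (enum A)) by rewrite (map_inj_uniq val_inj) enum_uniq.
have : size (map val (enum A)) = 2%N by rewrite size_map -cardE.
rewrite /fst_el /snd_el.
case: (map val (enum A)) uA => [|a [|b [|]]] //= uA _.
by split => //; move: uA; rewrite inE andbT.
Qed.

Lemma ord0_in_card2 m (A : {set 'I_m.+1}) : #|A| = 2%N ->
  (ord0 \in A) = (fst_el A == 0%N) || (snd_el A == 0%N).
Proof.
move=> /enum_card2 [eA _].
by rewrite -mem_enum -(mem_map val_inj) eA !inE !(eq_sym 0%N).
Qed.

Lemma max4pc_star_distE (w x y z : nat) : w != x -> y != z ->
  maxn (star_dist w x + star_dist y z)
       (maxn (star_dist w y + star_dist x z) (star_dist w z + star_dist x y))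
  = (2 + ~~ ((w == 0) || (x == 0)) + ~~ ((y == 0) || (z == 0)))%N.
Proof.
rewrite /star_dist.
by repeat match goal with |- context [?a == ?b] => case: (a =P b) => ?; subst end;
  rewrite ?eqxx.
Qed.

Lemma char_poly_mulmxC (R : comNzRingType) n k (P : 'M[R]_(n, k)) (Q : 'M[R]_(k, n)) :
  'X^k * char_poly (P *m Q) = 'X^n * char_poly (Q *m P).
Proof.
rewrite /char_poly /char_poly_mx !map_mxM.
set Pp := map_mx polyC P; set Qp := map_mx polyC Q.
pose B := block_mx ('X%:M : 'M_n) Pp Qp 1%:M.
have eBl : B *m block_mx 1%:M 0 (- Qp) 1%:M = block_mx ('X%:M - Pp *m Qp) Pp 0 1%:M.
  by rewrite mulmx_block !mulmx1 !mulmx0 !mul1mx !add0r mulmxN addrN.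
have eBr : block_mx 1%:M 0 (- Qp) ('X%:M) *m B = block_mx 'X%:M Pp 0 ('X%:M - Qp *m Pp).
  rewrite mulmx_block !mulmx1 !mul0mx !mul1mx !addr0 mulNmx.
  by rewrite mul_scalar_mx mul_mx_scalar addNr mulNmx addrC.
move/(congr1 determinant): eBl; rewrite det_mulmx det_lblock !det1 mulr1.
rewrite det_ublock det1 !mulr1 => <-.
move/(congr1 determinant): eBr; rewrite det_mulmx det_lblock det1 mul1r.
by rewrite det_ublock !det_scalar => ->.
Qed.

Lemma det_mx22 (R : comNzRingType) (A : 'M[R]_2) :
  \det A = A 0 0 * A 1 1 - A 0 1 * A 1 0.
Proof.
rewrite (expand_det_row _ 0) !big_ord_recl big_ord0 /cofactor !det_mx11 !mxE /=.
have -> : lift (0 : 'I_2) (0 : 'I_1) = 1 by exact/val_inj.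
have -> : lift 1 (0 : 'I_1) = 0 by exact/val_inj.
rewrite /bump /= expr0 expr1; ring.
Qed.

Lemma char_poly_mx22 (R : comNzRingType) (A : 'M[R]_2) :
  char_poly A = ('X - (A 0 0)%:P) * ('X - (A 1 1)%:P) - (A 0 1 * A 1 0)%:P.
Proof.
rewrite /char_poly det_mx22 /char_poly_mx !mxE /= !mulr1n !mulr0n.
by rewrite !sub0r mulrNN polyCM.
Qed.

Section StarFactorization.
Variables (R : comNzRingType) (m : nat).
Local Notation N := #|pairs m.+1|.

Definition avoids_center (A : {set 'I_m.+1}) : R := (ord0 \notin A)%:R.

Definition Max4PC_left : 'M[R]_(N, 2) :=
  \matrix_(i, j) (if j == 0 then 1 else avoids_center (enum_val i)).
Definition Max4PC_right : 'M[R]_(2, N) :=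
  \matrix_(i, j) (if i == 0 then 2 + avoids_center (enum_val j) else 1).

Lemma card_enum_val_pairs (i : 'I_N) : #|enum_val i| = 2%N.
Proof. by have := enum_valP i; rewrite inE => /eqP. Qed.

Lemma Max4PC_star_factor : Max4PC_star R m.+1 = Max4PC_left *m Max4PC_right.
Proof.
apply/matrixP => i j; rewrite !mxE !big_ord_recl big_ord0 !mxE /=.
have [_ ni] := enum_card2 _ _ (card_enum_val_pairs i).
have [_ nj] := enum_card2 _ _ (card_enum_val_pairs j).
rewrite /max4pc_entry max4pc_star_distE // -!ord0_in_card2 ?card_enum_val_pairs //.
rewrite /avoids_center !natrD /=; ring.
Qed.

Lemma avoids_center_idem A : avoids_center A * avoids_center A = avoids_center A.
Proof. by rewrite /avoids_center; case: (_ \notin _); rewrite ?mulr1 ?mulr0. Qed.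

Lemma sum_avoids_center : \sum_(i < N) avoids_center (enum_val i) = 'C(m, 2)%:R.
Proof.
rewrite -(big_enum_val avoids_center) /avoids_center -natr_sum; congr _%:R.
rewrite (eq_bigr (fun A : {set 'I_m.+1} => if ord0 \notin A then 1 else 0)%N);
  last first.
  by move=> A _; case: (_ \notin _).
rewrite -big_mkcondr sum1_card.
transitivity #|[set A : {set 'I_m.+1} | A \subset [set~ ord0] & #|A| == 2%N]|.
  apply: eq_card => A; rewrite !inE andbC; congr (_ && _); first by rewrite inE.
  by rewrite subsetC sub1set !inE.
by rewrite cards_draws cardsC1 card_ord.
Qed.

Lemma char_poly_Max4PC_right_left :
  let b : R := 'C(m, 2)%:R in
  char_poly (Max4PC_right *m Max4PC_left)
  = ('X - (2 *+ N + b)%:P) * ('X - b%:P) - (3 * b * N%:R)%:P.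
Proof.
rewrite char_poly_mx22 !mxE /=.
under eq_bigr do rewrite !mxE /= mulr1.
rewrite big_split /= sumr_const card_ord sum_avoids_center.
under eq_bigr do rewrite !mxE /= mul1r.
rewrite sum_avoids_center.
under eq_bigr do rewrite !mxE /= mulrDl avoids_center_idem.
rewrite big_split /= -mulr_sumr sum_avoids_center.
under eq_bigr do rewrite !mxE /= mulr1.
by rewrite sumr_const card_ord; congr (_ - _%:P); ring.
Qed.

End StarFactorization.

Lemma char_poly_Max4PC_star (R : comNzRingType) m : (2 <= m)%N ->
  char_poly (Max4PC_star R m.+1) =
    'X^('C(m.+1, 2) - 2) *
    ('X^2 - (2 * m ^ 2)%N%:R *: 'X - (m * 'C(m, 2))%N%:R%:P).
Proof.
move=> m2.
have cardN : #|pairs m.+1| = 'C(m.+1, 2) by rewrite /pairs card_draws card_ord.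
have two_le_N : (2 <= 'C(m.+1, 2))%N by rewrite binS bin1; lia.
have sq_m : (2 * m ^ 2 = 2 * m + 4 * 'C(m, 2))%N.
  by have := mul_bin_diag m 1; rewrite bin1 -subn1; nia.
apply: (monic_lreg (monicXn _ 2)).
rewrite Max4PC_star_factor char_poly_mulmxC char_poly_Max4PC_right_left cardN.
rewrite mulrA -exprD subnKC //; congr (_ * _).
rewrite sq_m binS bin1 !natrD !natrM -mul_polyC; ring.
Qed.

Lemma root_quadratic (R : rcfType) (b c a : R) : 0 <= b ^+ 2 + c ->
  root ('X^2 - (2 * b) *: 'X - c%:P) a =
  (a == b + Num.sqrt (b ^+ 2 + c)) || (a == b - Num.sqrt (b ^+ 2 + c)).
Proof.
move=> disc_ge0; rewrite rootE.
have -> : ('X^2 - (2 * b) *: 'X - c%:P).[a]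
          = (a - b) ^+ 2 - Num.sqrt (b ^+ 2 + c) ^+ 2.
  by rewrite sqr_sqrtr // !hornerE; ring.
by rewrite subr_eq0 eqf_sqr !subr_eq !(addrC _ b).
Qed.

Theorem mainTheorem9 (R : rcfType) (n : nat) (hn : (3 <= n)%N) :
  char_poly (Max4PC_star R n) =
    'X^('C(n, 2) - 2) *
    ('X^2 - ((2 * (n - 1) ^ 2)%N)%:R *: 'X - (((n - 1) * 'C(n - 1, 2))%N)%:R%:P)
  /\ (forall a : R, a != 0 ->
        (eigenvalue (Max4PC_star R n) a <->
           (a = ((n - 1) ^ 2)%N%:R + Num.sqrt (((n - 1) ^ 4 + (n - 1) * 'C(n - 1, 2))%N%:R)
            \/ a = ((n - 1) ^ 2)%N%:R - Num.sqrt (((n - 1) ^ 4 + (n - 1) * 'C(n - 1, 2))%N%:R)))).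
Proof.
case: n hn => [|m] // m2; rewrite subn1 /=.
have cpE := @char_poly_Max4PC_star R m m2.
split=> [//|a a_neq0].
rewrite eigenvalue_root_char cpE rootM rootE hornerXn expf_eq0 (negbTE a_neq0).
rewrite andbF /= (natrM _ 2).
have -> : (m ^ 4 + m * 'C(m, 2))%N%:R = (m ^ 2)%N%:R ^+ 2 + (m * 'C(m, 2))%N%:R :> R.
  by rewrite natrD -natrX -expnM.
rewrite root_quadratic ?addr_ge0 ?exprn_ge0 ?ler0n //.
by split=> [/orP [] /eqP|[] ->]; [left|right|rewrite eqxx|rewrite eqxx orbT].
Qed.
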